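(* Let $C=\{c_1,\dots,c_m\}\subset\mathbb{R}$ with $c_1\le\dots\le c_m$, let $\mathcal{I}$ be a finite set of closed intervals in $\mathbb{R}$ and $f\ge0$ an integer such that every $I\in\mathcal{I}$ satisfies $|I\cap C|>f$. Let $T$ be the output of the following greedy procedure: start with $T=\emptyset$; for $t=1,\dots,m$ in order, if there exist $i,j$ with $1\le i\le t\le j\le m$ and $\delta_{i,j}(f)\ge|T\cap C_{i,j}|+(j-t+1)$ (current $T$), add $c_t$ to $T$. Write $T=\{c_{k_1},\dots,c_{k_r}\}$ with $k_1<\dots<k_r$, and let $\mathsf{opt}$ be the minimum size of a subset $S\subseteq C$ satisfying $|S\cap C_{i,j}|\ge\delta_{i,j}(f)$ for all $1\le i\le j\le m$. Then for every $t\in\{1,\dots,r\}$ there exists $T^*\subseteq C$ such that (1) $|T^*\cap C_{i,j}|\ge\delta_{i,j}(f)$ for all $1\le i\le j\le m$, (2) $|T^*|=\mathsf{opt}$, and (3) $\{c_{k_1},\dots,c_{k_t}\}\subseteq T^*$.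
   Context: For a set of points $X$, a set of intervals is $X$-disjoint if every point of $X$ lies in at most one of its intervals. For $1\le i\le j\le m$: $C_{i,j}=\{c_i,\dots,c_j\}$; $\mathcal{I}_{i,j}=\{I\in\mathcal{I}: I\cap C\subseteq C_{i,j}\}$; for $J\subseteq C_{i,j}$, $\delta_{i,j}(J)$ is the maximum size of a $(C_{i,j}\setminus J)$-disjoint subset of $\mathcal{I}_{i,j}$; and $\delta_{i,j}(f)=\max_{J\subseteq C_{i,j},|J|\le f}\delta_{i,j}(J)$. *)

From HB Require Import structures.
From mathcomp Require Import all_boot all_order all_algebra.
From mathcomp Require Export finmap.
Set Implicit Arguments. Unset Strict Implicit. Unset Printing Implicit Defensive.
Import Order.TTheory GRing.Theory Num.Theory.
Local Open Scope fset_scope.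
Local Open Scope ring_scope.

Section Defs.
Variable R : realFieldType.
(* points c_1, ..., c_m given as a function on 1-based indices *)
Variable c : nat -> R.
Variable m : nat.

(* a closed interval [a, b] is represented by the pair (a, b) *)
Definition in_itv (I : R * R) (x : R) : bool := (I.1 <= x) && (x <= I.2).

Definition Cset : {fset R} := [fset c k | k in iota 1 m].

Definition Cij (i j : nat) : {fset R} := [fset c k | k in iota i (j.+1 - i)].

Definition itv_cap (I : R * R) (X : {fset R}) : {fset R} :=
  [fset x in X | in_itv I x].

Definition Iij (Iset : {fset R * R}) (i j : nat) : {fset R * R} :=
  [fset I in Iset | itv_cap I Cset `<=` Cij i j].

Definition disjoint_on (X : {fset R}) (K : {fset R * R}) : bool :=
  all (fun x => (#|` [fset I in K | in_itv I x]| <= 1)%N) (enum_fset X).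

Definition delta_J (Iset : {fset R * R}) (i j : nat) (J : {fset R}) : nat :=
  \max_(K <- enum_fset (fpowerset (Iij Iset i j)) | disjoint_on (Cij i j `\` J) K)
     #|` K|.

Definition delta (Iset : {fset R * R}) (f : nat) (i j : nat) : nat :=
  \max_(J <- enum_fset (fpowerset (Cij i j)) | (#|` J| <= f)%N) delta_J Iset i j J.

Definition feasibleb (Iset : {fset R * R}) (f : nat) (S : {fset R}) : bool :=
  (S `<=` Cset) &&
  all (fun i => all (fun j => (delta Iset f i j <= #|` S `&` Cij i j|)%N)
                    (iota i (m.+1 - i)))
      (iota 1 m).

(* opt = minimum size of a feasible S (C itself is feasible, so the
   default value #|C| of the fold is never smaller than the true minimum) *)
Definition opt (Iset : {fset R * R}) (f : nat) : nat :=
  \big[minn/#|` Cset|]_(S <- enum_fset (fpowerset Cset) | feasibleb Iset f S) #|` S|.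

Definition greedy_cond (Iset : {fset R * R}) (f : nat) (t : nat) (T : {fset R}) : bool :=
  has (fun i => has (fun j =>
         (#|` T `&` Cij i j| + (j.+1 - t) <= delta Iset f i j)%N)
       (iota t (m.+1 - t)))
    (iota 1 t).

Fixpoint greedy (Iset : {fset R * R}) (f : nat) (n : nat) : {fset R} :=
  match n with
  | 0 => fset0
  | n'.+1 => let T := greedy Iset f n' in
             if greedy_cond Iset f n T then c n |` T else T
  end.

Definition greedy_out (Iset : {fset R * R}) (f : nat) : {fset R} := greedy Iset f m.

Definition greedy_idx (Iset : {fset R * R}) (f : nat) : seq nat :=
  [seq k <- iota 1 m | c k \in greedy_out Iset f].

End Defs.

From Pilot Require Import Defs.
From HB Require Import structures.
From mathcomp Require Import all_boot all_order all_algebra.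
From mathcomp Require Import finmap zify.
Import Order.TTheory GRing.Theory Num.Theory.
Local Open Scope fset_scope.
Local Open Scope nat_scope.
Set Implicit Arguments. Unset Strict Implicit.

(* Exchange argument.  Write T_k for the greedy set after step k, let S be an
   optimal solution containing T = T_{t-1}, and suppose that c_t is added, because
   delta_{i,j}(f) >= |T ∩ C_{i,j}| + (j - t + 1), although c_t is not in S.
   Counting in C_{i,j} (T has no point from c_t on, S has at most j - t points
   after c_t) gives a point c_q of S \ T with q < t; let c_q' be the first point after c_q that is
   missing from S, so q' <= t.  Replacing c_q by c_q' keeps S feasible: only a
   window C_{i',j'} with i' <= q <= j' < q' loses a point, and since the greedy
   procedure rejected c_q, delta_{i',j'}(f) <= |T_{q-1} ∩ C_{i',j'}| + (j' - q),
   which is still covered by the points of T before c_q and by c_{q+1}, ...,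
   c_{j'}, all in S.  The swap moves a point of S to the right, so iterating it
   puts c_t into S. *)

Lemma sub_in_count (T : eqType) (a1 a2 : pred T) (s : seq T) :
  {in s, forall x, a1 x -> a2 x} -> count a1 s <= count a2 s.
Proof.
move=> sub12; rewrite -(@eq_in_count _ (predI a1 a2)); first by apply: sub_count => x /andP[].
by move=> x xs /=; apply/andb_idr/sub12.
Qed.

Lemma sum_exchange (T : eqType) (s : seq T) (P P' : pred T) (F : T -> nat) q q' :
  uniq s -> P q -> ~~ P q' ->
  {in s, forall k, P' k = (k == q') || P k && (k != q)} ->
  \sum_(k <- s | P' k) F k + (q \in s) * F q =
  \sum_(k <- s | P k) F k + (q' \in s) * F q'.
Proof.
move=> + Pq Pq'; elim: s => [|x s IHs] /=; first by rewrite !big_nil.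
case/andP=> xs s_uniq P'E; rewrite !big_cons !in_cons P'E ?mem_head //.
have {IHs} := IHs s_uniq (fun k ks => P'E k (mem_behead (s := x :: s) ks)).
have qq' : q != q' by apply: contraNneq Pq' => <-.
case: (eqVneq x q) => [xq|xq].
  by subst x; rewrite Pq (negbTE qq') [q' == q]eq_sym (negbTE qq') (negbTE xs) /=; lia.
case: (eqVneq x q') => [xq'|_] /=; last by case: (P x) => /=; lia.
by subst x; rewrite (negbTE xs) (negbTE Pq') /=; lia.
Qed.

Lemma iota_split a b p : a <= p <= b ->
  iota a (b.+1 - a) = iota a (p - a) ++ p :: iota p.+1 (b - p).
Proof.
move=> /andP[ap pb]; have -> : b.+1 - a = (p - a) + (b - p).+1 by lia.
by rewrite iotaD subnKC.
Qed.

Lemma cardfs_exchange (K : choiceType) (A : {fset K}) a b :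
  a \in A -> b \notin A -> #|` b |` (A `\ a)| = #|` A|.
Proof.
by move=> aA bA; rewrite cardfsU1 in_fsetD1 (negbTE bA) andbF [RHS](cardfsD1 a) aA.
Qed.

Lemma head_enum_fset_mem (K : choiceType) (A : {fset K}) x d :
  x \in A -> head d (enum_fset A) \in A.
Proof.
rewrite -[x \in A]/(x \in enum_fset A) -[_ \in A]/(_ \in enum_fset A).
by case: (enum_fset A) => //= y s _; rewrite mem_head.
Qed.

Lemma disjoint_on_card (R : realFieldType) (X : {fset R}) (K : {fset R * R}) :
  disjoint_on X K -> (forall I, I \in K -> exists2 x, x \in X & Defs.in_itv I x) ->
  #|` K| <= #|` X|.
Proof.
move=> /allP K_disj K_meet.
pose pt I := head 0%R (enum_fset [fset x in X | Defs.in_itv I x]).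
have ptP I : I \in K -> pt I \in X /\ Defs.in_itv I (pt I).
  case/K_meet => x xX xI; have : x \in [fset y in X | Defs.in_itv I y] by rewrite !inE xX.
  by move/(@head_enum_fset_mem _ _ _ 0%R); rewrite -/(pt I) !inE => /andP[].
have pt_inj : {in K &, injective pt}.
  move=> I1 I2 I1K I2K pt12; apply/eqP/negPn/negP => I12.
  have [ptX ptI1] := ptP _ I1K; have [_ ptI2] := ptP _ I2K.
  have sub12 : [fset I1; I2] `<=` [fset I | I in K & Defs.in_itv I (pt I1)].
    by apply/fsubsetP => I /fset2P[|] ->; rewrite !inE ?I1K ?I2K // pt12.
  by have := K_disj _ ptX; have := fsubset_leq_card sub12; rewrite cardfs2 I12; lia.
move/card_in_imfsetP/eqP: pt_inj => <-; apply/fsubset_leq_card/fsubsetP => _ /imfsetP[I IK ->].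
by case: (ptP _ IK).
Qed.

Lemma bigmin_seq_attained (I : eqType) (r : seq I) (P : pred I) (F : I -> nat) x i0 :
  i0 \in r -> P i0 -> F i0 <= x ->
  exists2 i, (i \in r) && P i & F i = \big[minn/x]_(i <- r | P i) F i.
Proof.
move=> i0r Pi0 Fi0x; pose value n := has (fun i => P i && (F i == n)) r.
have value_F_i0 : exists n, value n.
  by exists (F i0); apply/hasP; exists i0; rewrite ?Pi0 ?eqxx.
have [n /hasP[i ir /andP[Pi /eqP Fin]] n_min] := ex_minnP value_F_i0.
have F_ge k : k \in r -> P k -> n <= F k.
  by move=> kr Pk; apply: n_min; apply/hasP; exists k; rewrite ?Pk ?eqxx.
exists i; first by rewrite ir Pi.
apply/eqP; rewrite eqn_leq -minEnat -leEnat; apply/andP; split.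
  rewrite Fin big_seq_cond; apply: le_bigmin => [|k /andP[]]; last exact: F_ge.
  exact: leq_trans (F_ge _ i0r Pi0) Fi0x.
exact: ge_bigmin_seq.
Qed.

Section GreedyExchange.
Variables (R : realFieldType) (c : nat -> R) (m : nat) (Iset : {fset R * R}) (f : nat).
Hypothesis c_inj : {in [pred k | 0 < k <= m] &, injective c}.
Hypothesis I_big : forall I, I \in Iset -> f < #|` itv_cap I (Cset c m)|.

Local Notation count_in S s := (count (fun k => c k \in S) s).

Lemma mem_Cset k : 0 < k <= m -> c k \in Cset c m.
Proof. by move=> km; apply/imfsetP; exists k; rewrite //= mem_iota; lia. Qed.

Lemma Cij_index i j x : x \in Cij c i j -> exists2 k, i <= k <= j & x = c k.
Proof. by case/imfsetP => k /=; rewrite mem_iota => kij ->; exists k => //; lia. Qed.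

Lemma Cij_sub_Cset i j : 0 < i -> j <= m -> Cij c i j `<=` Cset c m.
Proof. by move=> i0 jm; apply/fsubsetP => _ /Cij_index[k kij ->]; apply: mem_Cset; lia. Qed.

Lemma card_fsetI_Cij (S : {fset R}) i j : 0 < i -> j <= m ->
  #|` S `&` Cij c i j| = count_in S (iota i (j.+1 - i)).
Proof.
move=> i0 jm; set s := iota i (j.+1 - i).
have -> : S `&` Cij c i j = [fset c k | k in [seq k <- s | c k \in S]].
  apply/fsetP => x; rewrite in_fsetI; apply/andP/imfsetP => [[xS]|[k /=]].
    by case/imfsetP => k /= ks xk; exists k; rewrite //= mem_filter -xk xS.
  by rewrite mem_filter => /andP[kS ks] ->; split=> //; apply/imfsetP; exists k.
rewrite card_in_imfset /= ?undup_id ?filter_uniq ?iota_uniq ?size_filter //.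
move=> k l; rewrite !mem_filter !mem_iota => /andP[_ kij] /andP[_ lij].
by apply: c_inj; rewrite inE; lia.
Qed.

Lemma delta_le_card_Cij i j : delta c m Iset f i j <= #|` Cij c i j|.
Proof.
apply/bigmax_leqP_seq => J _ Jf; apply/bigmax_leqP_seq => K; rewrite fpowersetE => KI K_disj.
apply: leq_trans (disjoint_on_card K_disj _) (fsubset_leq_card (fsubsetDl _ _)).
move=> I IK; move/fsubsetP/(_ I IK): KI; rewrite !inE => /andP[IIset ICij].
have : itv_cap I (Cset c m) `\` J != fset0.
  by rewrite fsetD_eq0; apply: contraTN (I_big IIset) => /fsubset_leq_card; lia.
case/fset0Pn => x; rewrite !inE => /and3P[xJ xC xI].
by exists x => //; rewrite !inE xJ (fsubsetP ICij) // !inE xC.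
Qed.

Definition feasible (S : {fset R}) :=
  S `<=` Cset c m /\
  forall i j, 0 < i -> i <= j -> j <= m -> delta c m Iset f i j <= #|` S `&` Cij c i j|.

Definition optimal (S : {fset R}) := feasible S /\ #|` S| = opt c m Iset f.

Lemma feasibleP S : reflect (feasible S) (feasibleb c m Iset f S).
Proof.
apply: (iffP andP) => -[SC S_delta]; split=> //.
  move=> i j i0 ij jm; move/allP/(_ i): S_delta; rewrite mem_iota => /(_ ltac:(lia)).
  by move/allP; apply; rewrite mem_iota; lia.
apply/allP => i; rewrite mem_iota => im; apply/allP => j; rewrite mem_iota => ij.
by apply: S_delta; lia.
Qed.

Lemma Cset_feasible : feasible (Cset c m).
Proof.
split=> // i j i0 _ jm; rewrite (fsetIidPr (Cij_sub_Cset i0 jm)).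
exact: delta_le_card_Cij.
Qed.

Lemma exists_optimal : exists S, optimal S.
Proof.
have CP : Cset c m \in enum_fset (fpowerset (Cset c m)) by rewrite [_ \in _]fpowersetE.
have [S /andP[_ /feasibleP S_feas] S_opt] := bigmin_seq_attained
  (F := fun S : {fset R} => #|` S|) CP (introT (feasibleP _) Cset_feasible) (leqnn _).
by exists S.
Qed.

Lemma greedy_condP t T :
  reflect (exists i j, [/\ 0 < i <= t, t <= j <= m &
             #|` T `&` Cij c i j| + (j.+1 - t) <= delta c m Iset f i j])
          (greedy_cond c m Iset f t T).
Proof.
apply: (iffP hasP) => [[i + /hasP[j]]|[i [j [it tj cond]]]].
  by rewrite !mem_iota => ti jt cond; exists i, j; split=> //; lia.
exists i; first by rewrite mem_iota; lia.
by apply/hasP; exists j; rewrite // mem_iota; lia.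
Qed.

Lemma greedy_mono : {homo greedy c m Iset f : n1 n2 / n1 <= n2 >-> n1 `<=` n2}.
Proof.
apply: homo_leq => [S|S1 S2 S3|n /=]; [exact: fsubset_refl|exact: fsubset_trans|].
by case: ifP => _; [exact: fsubsetU1|exact: fsubset_refl].
Qed.

Lemma greedy_index n x : x \in greedy c m Iset f n -> exists2 k, 0 < k <= n & x = c k.
Proof.
elim: n => [|n IHn] /=; first by rewrite inE.
have IHn' : x \in greedy c m Iset f n -> exists2 k, 0 < k <= n.+1 & x = c k.
  by case/IHn => k kn ->; exists k => //; lia.
case: ifP => _; last exact: IHn'.
by rewrite in_fset1U => /orP[/eqP->|/IHn' //]; exists n.+1; rewrite ?leqnn.
Qed.

Lemma notin_greedy n k : n < k <= m -> c k \notin greedy c m Iset f n.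
Proof.
move=> nkm; apply/negP => /greedy_index[l ln /c_inj lk].
by have := lk ltac:(rewrite inE; lia) ltac:(rewrite inE; lia); lia.
Qed.

Lemma greedy_rejected n q : 0 < q <= n -> c q \notin greedy c m Iset f n ->
  ~~ greedy_cond c m Iset f q (greedy c m Iset f q.-1).
Proof.
case: q => // q /= qn; apply: contra => cond.
by apply: (fsubsetP (greedy_mono qn)); rewrite /= cond in_fset1U eqxx.
Qed.

Lemma count_in_notin (T : {fset R}) s : {in s, forall k, c k \notin T} -> count_in T s = 0.
Proof. by move=> sT; apply/eqP; rewrite -leqn0 leqNgt -has_count; apply/hasPn. Qed.

Lemma greedy_cond_extra S T t : feasible S -> greedy_cond c m Iset f t T ->
  c t \notin S -> (forall k, t <= k <= m -> c k \notin T) ->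
  exists q, [/\ 0 < q < t, c q \in S & c q \notin T].
Proof.
move=> [_ S_delta] /greedy_condP[i [j [/andP[i0 it] /andP[tj jm] cond]]] tS T_late.
have := S_delta i j i0 (leq_trans it tj) jm.
rewrite !card_fsetI_Cij // (iota_split (p := t)) ?it // !count_cat /= (negbTE tS) in cond *.
have T_after : count_in T (iota t.+1 (j - t)) = 0.
  by apply: count_in_notin => k; rewrite mem_iota => tk; apply: T_late; lia.
rewrite (negbTE (T_late t _)) ?T_after in cond; last lia.
have S_after : count_in S (iota t.+1 (j - t)) <= j - t.
  by rewrite -{2}(size_iota t.+1 (j - t)) count_size.
move=> S_cover.
have : has (fun k => (c k \in S) && (c k \notin T)) (iota i (t - i)).
  apply/negPn/negP => /hasPn no_extra.
  have : count_in S (iota i (t - i)) <= count_in T (iota i (t - i)).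
    by apply: sub_in_count => k /no_extra; case: (c k \in S) => //=; rewrite negbK.
  by move: cond S_cover S_after => /=; lia.
by case/hasP => q; rewrite mem_iota => qit /andP[qS qT]; exists q; split=> //; lia.
Qed.

Lemma mem_exchange S q q' k : 0 < q <= m -> 0 < q' <= m -> 0 < k <= m ->
  (c k \in c q' |` (S `\ c q)) = (k == q') || (c k \in S) && (k != q).
Proof.
move=> qm q'm km; rewrite in_fset1U in_fsetD1 andbC.
by rewrite !(inj_in_eq c_inj) ?inE.
Qed.

Lemma count_in_exchange S q q' s : uniq s -> {subset s <= [pred k | 0 < k <= m]} ->
  0 < q <= m -> 0 < q' <= m -> c q \in S -> c q' \notin S ->
  count_in (c q' |` (S `\ c q)) s + (q \in s) = count_in S s + (q' \in s).
Proof.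
move=> s_uniq s_range qm q'm qS q'S.
rewrite -!sum1_count -[nat_of_bool (q \in s)]muln1 -[nat_of_bool (q' \in s)]muln1.
apply: sum_exchange => // k /s_range; rewrite inE; exact: mem_exchange.
Qed.

Lemma feasible_exchange S G q q' :
  feasible S -> 0 < q -> q < q' <= m -> c q \in S -> c q' \notin S ->
  (forall k, q < k < q' -> c k \in S) ->
  G `<=` S -> (forall k, q <= k <= m -> c k \notin G) ->
  ~~ greedy_cond c m Iset f q G ->
  feasible (c q' |` (S `\ c q)).
Proof.
move=> [SC S_delta] q0 /andP[qq' q'm] qS q'S S_between GS G_late G_rej.
have qm : 0 < q <= m by lia.
have q'm' : 0 < q' <= m by lia.
split=> [|i j i0 ij jm].
  apply/fsubsetP => x; rewrite in_fset1U in_fsetD1 => /orP[/eqP->|/andP[_ /(fsubsetP SC)//]].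
  by apply: mem_Cset.
have := S_delta i j i0 ij jm; rewrite !card_fsetI_Cij //.
have s_range : {subset iota i (j.+1 - i) <= [pred k | 0 < k <= m]}.
  by move=> k; rewrite mem_iota inE; lia.
have := count_in_exchange (iota_uniq _ _) s_range qm q'm' qS q'S.
case: (boolP (q \in _)) => [|_] /=; last by lia.
case: (boolP (q' \in _)) => [_|] /=; first by lia.
rewrite !mem_iota => q'_out q_in _ _.
have [iq qj] : i <= q /\ q <= j by lia.
have G_cover : delta c m Iset f i j < #|` G `&` Cij c i j| + (j.+1 - q).
  rewrite ltnNge; apply: contra G_rej => cond.
  by apply/greedy_condP; exists i, j; split=> //; lia.
rewrite card_fsetI_Cij // (iota_split (p := q)) ?iq // !count_cat /= in G_cover *.
have G_before : count_in G (iota i (q - i)) <= count_in (c q' |` (S `\ c q)) (iota i (q - i)).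
  apply: sub_in_count => k; rewrite mem_iota => kq /(fsubsetP GS) kS.
  by rewrite mem_exchange ?kS; lia.
have G_after : count_in G (iota q.+1 (j - q)) = 0.
  by apply: count_in_notin => k; rewrite mem_iota => qk; apply: G_late; lia.
have S'_after : count_in (c q' |` (S `\ c q)) (iota q.+1 (j - q)) = j - q.
  rewrite -{2}(size_iota q.+1 (j - q)); apply/eqP; rewrite -all_count; apply/allP => k.
  by rewrite mem_iota => qk; rewrite mem_exchange ?S_between; lia.
move: G_cover G_before; rewrite (negbTE (G_late q _)) ?G_after ?S'_after /=; lia.
Qed.

Definition potential (S : {fset R}) := \sum_(k <- iota 1 m | c k \in S) (m - k).

Lemma potential_exchange S q q' : 0 < q -> q < q' <= m -> c q \in S -> c q' \notin S ->
  potential (c q' |` (S `\ c q)) < potential S.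
Proof.
move=> q0 /andP[qq' q'm] qS q'S.
have mem_S' k : k \in iota 1 m ->
    (c k \in c q' |` (S `\ c q)) = (k == q') || (c k \in S) && (k != q).
  by rewrite mem_iota => km; apply: mem_exchange; lia.
have := sum_exchange (fun k => m - k) (iota_uniq 1 m) qS q'S mem_S'.
rewrite !mem_iota (_ : 0 < q < 1 + m) 1?(_ : 0 < q' < 1 + m) /=; try lia.
by rewrite /potential /=; lia.
Qed.

Lemma exchange_step n S : n < m -> greedy_cond c m Iset f n.+1 (greedy c m Iset f n) ->
  optimal S -> greedy c m Iset f n `<=` S -> c n.+1 \notin S ->
  exists S', [/\ optimal S', greedy c m Iset f n `<=` S' & potential S' < potential S].
Proof.
move=> nm cond [S_feas S_opt] TS nS.
have [|q [/andP[q0 qn] qS qT]] := greedy_cond_extra S_feas cond nS.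
  by move=> k kn; apply: notin_greedy; lia.
have q_rej := greedy_rejected (n := n) (q := q) ltac:(lia) qT.
have [|q' /andP[/andP[qq' q'm] q'S] q'_min] :=
  ex_minnP (P := fun k => (q < k <= m) && (c k \notin S)).
  by exists n.+1; rewrite nS andbT; lia.
have S_between k : q < k < q' -> c k \in S.
  by move=> qkq'; apply/negPn/negP => kS; have := q'_min k; rewrite kS andbT; lia.
have q'n : q' <= n.+1 by apply: q'_min; rewrite nS andbT; lia.
exists (c q' |` (S `\ c q)); split; first split.
- apply: (@feasible_exchange S (greedy c m Iset f q.-1) q q') => //; try lia.
    by apply: fsubset_trans TS; apply: greedy_mono; lia.
  by move=> k qk; apply: notin_greedy; lia.
- by rewrite cardfs_exchange.
- apply/fsubsetP => x xT; rewrite in_fset1U in_fsetD1 (fsubsetP TS) // andbT.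
  by apply/orP; right; apply: contraNneq qT => <-.
- by apply: potential_exchange => //; lia.
Qed.

Lemma optimal_sup_greedyS n S : n < m -> optimal S -> greedy c m Iset f n `<=` S ->
  exists S', optimal S' /\ greedy c m Iset f n.+1 `<=` S'.
Proof.
move=> nm; move pS: (potential S) => p; elim/ltn_ind: p S pS => p IHp S pS S_opt TS.
case cond: (greedy_cond c m Iset f n.+1 (greedy c m Iset f n));
  last by exists S; rewrite /= cond.
have [nS|nS] := boolP (c n.+1 \in S).
  by exists S; rewrite /= cond fsubUset fsub1set nS TS.
have [S' [S'_opt TS' lt_pS']] := exchange_step nm cond S_opt TS nS.
by apply: (IHp (potential S')) => //; rewrite -pS.
Qed.

Lemma exists_optimal_sup_greedy n : n <= m ->
  exists S, optimal S /\ greedy c m Iset f n `<=` S.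
Proof.
elim: n => [|n IHn] nm.
  by have [S S_opt] := exists_optimal; exists S; split=> //; apply: fsub0set.
have [S [S_opt TS]] := IHn (ltnW nm).
exact: optimal_sup_greedyS nm S_opt TS.
Qed.

End GreedyExchange.

Unset Implicit Arguments.
Local Open Scope ring_scope.

Theorem lemma8 (R : realFieldType) (m : nat) (c : nat -> R)
  (Iset : {fset R * R}) (f : nat)
  (c_sorted : forall k, (1 <= k)%N -> (k < m)%N -> c k < c k.+1)
  (I_closed : forall I, I \in Iset -> I.1 <= I.2)
  (I_big : forall I, I \in Iset -> (f < #|` itv_cap I (Cset c m)|)%N) :
  let ks := greedy_idx c m Iset f in
  forall t, (1 <= t)%N -> (t <= size ks)%N ->
  exists Tstar : {fset R},
    Tstar `<=` Cset c m /\
    (forall i j, (1 <= i)%N -> (i <= j)%N -> (j <= m)%N ->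
       (delta c m Iset f i j <= #|` Tstar `&` Cij c i j|)%N) /\
    #|` Tstar| = opt c m Iset f /\
    [fset c k | k in take t ks] `<=` Tstar.
Proof.
(* A single optimal set contains the whole greedy output. *)
move=> ks t _ _.
have c_inj : {in [pred k | (0 < k <= m)%N] &, injective c}.
  apply: inc_inj_in; apply: Order.NatMonotonyTheory.incn_inP => [i j|i]; rewrite !inE.
    by move=> ? ? k; rewrite !ltEnat inE /=; lia.
  by move=> /andP[i0 _] /andP[_ im]; apply: c_sorted.
have [S [[[SC S_delta] S_opt] GS]] := exists_optimal_sup_greedy c_inj I_big (leqnn m).
exists S; do !split => //.
apply/fsubsetP => _ /imfsetP[k /= /mem_take + ->].
by rewrite mem_filter => /andP[Gk _]; apply: (fsubsetP GS).
Qed.
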